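(* Let $\nabla$ be a module connection on $M$ with associated connection $(\mathsf K_\nabla,\mathsf H_\nabla)$ on $\mathsf q_M$. Then $\mathsf C_{\mathsf K_\nabla}(a)=a$ for all $a\in A$ and $\mathsf C_{\mathsf K_\nabla}(m)=\psi(\nabla^2(m))$ for all $m\in M$. In particular, if $\nabla^2=0$ then $(\mathsf K_\nabla,\mathsf H_\nabla)$ is flat.
   Context: Fix a commutative ring $R$, a commutative $R$-algebra $A$ and an $A$-module $M$; algebra maps are $R$-algebra homomorphisms. $\Omega(A)$ is the Kähler module of $A$ over $R$ with universal derivation $\mathsf d$, and a module connection on $M$ is an $R$-linear $\nabla:M\to\Omega(A)\otimes_AM$ with $\nabla(am)=a\nabla(m)+\mathsf d(a)\otimes m$. $\mathsf S_A(M)$ is the symmetric $A$-algebra on $M$; for an algebra $B$, $\mathsf T(B)=\mathrm{Sym}_B(\Omega(B))$ with universal derivation $\mathsf d:B\to\mathsf T(B)$, and $\mathsf T^2(B)=\mathsf T(\mathsf T(B))$ with universal derivation $\mathsf d':\mathsf T(B)\to\mathsf T^2(B)$. For an algebra map $h:X\to Y$, $\mathsf T(h)$ sends $x\mapsto h(x)$ and $\delta_X(x)\mapsto\delta_Y(h(x))$ ($\delta$ the universal derivations). $\mathsf c_B:\mathsf T^2(B)\to\mathsf T^2(B)$ is the algebra map $b\mapsto b$, $\mathsf d(b)\mapsto\mathsf d'(b)$, $\mathsf d'(b)\mapsto\mathsf d(b)$, $\mathsf d'\mathsf d(b)\mapsto\mathsf d'\mathsf d(b)$. $\mathsf K_\nabla:\mathsf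 S_A(M)\to\mathsf T(\mathsf S_A(M))$ is the algebra map $a\mapsto a$, $m\mapsto\mathsf d(m)-\sum_im_i\,\mathsf d(a_i)$ where $\nabla(m)=\sum_i\mathsf d(a_i)\otimes m_i$ (and $\mathsf H_\nabla$ is the algebra map $a\mapsto a\otimes1$, $m\mapsto1\otimes m$, $\mathsf d(a)\mapsto\mathsf d(a)\otimes1$, $\mathsf d(m)\mapsto\nabla(m)$). Let $\Omega^2(A)=\Omega(A)\wedge_A\Omega(A)$. Every element of $\Omega(A)\otimes_AM$ can be written as $\sum_i\mathsf d(a_i)\otimes m_i$. The curvature of $\nabla$ is $\nabla^2:M\to\Omega^2(A)\otimes_AM$, $\nabla^2(m)=\sum_i\sum_j(\mathsf d(a_i)\wedge\mathsf d(a_{ij}))\otimes m_{ij}$ where $\nabla(m)=\sum_i\mathsf d(a_i)\otimes m_i$ and $\nabla(m_i)=\sum_j\mathsf d(a_{ij})\otimes m_{ij}$ (the composite $(\omega\otimes1)\circ(1\otimes\nabla)\circ\nabla$ with $\omega(\alpha\otimes\beta)=\alpha\wedge\beta$). For a vertical connection $\mathsf K:\mathsf S_A(M)\to\mathsf T(\mathsf S_A(M))$, its curvature is the algebra map $\mathsf C_{\mathsf K}:\mathsf S_A(M)\to\mathsf T^2(\mathsf S_A(M))$ with $\mathsf C_{\mathsf K}(a)=\mathsf c_{\mathsf S_A(M)}(\mathsf T(\mathsf K)(\mathsf K(a)))$ and $\mathsf C_{\mathsf K}(m)=\mathsf c_{\mathsf S_A(M)}(\mathsf T(\mathsf K)(\mathsf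 K(m)))-\mathsf T(\mathsf K)(\mathsf K(m))$; the connection is flat if $\mathsf C_{\mathsf K}(a)=a$ and $\mathsf C_{\mathsf K}(m)=0$ for all $a\in A$, $m\in M$. The map $\psi:\Omega^2(A)\otimes_AM\to\mathsf T^2(\mathsf S_A(M))$ is $(\mathsf d(a)\wedge\mathsf d(b))\otimes m\mapsto m\,\mathsf d(a)\mathsf d'(b)-m\,\mathsf d'(a)\mathsf d(b)$, extended additively. *)

From HB Require Import structures.
From mathcomp Require Import all_boot all_algebra.
From Stdlib Require Import ClassicalEpsilon.

Set Implicit Arguments.
Unset Strict Implicit.
Unset Printing Implicit Defensive.

Import GRing.Theory.
Local Open Scope ring_scope.

(* Generic "the object satisfying P" (P is expected to determine it).  *)
Definition the_obj (T : Type) (P : T -> Prop) (dflt : T) : T :=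
  match excluded_middle_informative (exists x, P x) with
  | left h => proj1_sig (constructive_indefinite_description _ h)
  | right _ => dflt
  end.

Section Algebras.
Variable R : comPzRingType.

Record calg := CAlg { calg_car :> comPzRingType; calg_str : {rmorphism R -> calg_car} }.

Definition is_alg_map (X Y : calg) (f : X -> Y) : Prop :=
  (forall x y, f (x + y) = f x + f y) /\ (forall x y, f (x * y) = f x * f y) /\
  f 1 = 1 /\ (forall r, f (calg_str X r) = calg_str Y r).

Definition is_lin (A : pzRingType) (U V : lmodType A) (f : U -> V) : Prop :=
  (forall u v, f (u + v) = f u + f v) /\ (forall a u, f (a *: u) = a *: f u).

Definition is_bilin (A : pzRingType) (U V W : lmodType A) (b : U -> V -> W) : Prop :=
  (forall u1 u2 v, b (u1 + u2) v = b u1 v + b u2 v) /\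
  (forall u v1 v2, b u (v1 + v2) = b u v1 + b u v2) /\
  (forall a u v, b (a *: u) v = a *: b u v) /\
  (forall a u v, b u (a *: v) = a *: b u v).

Definition is_mder (A : calg) (N : lmodType A) (D : A -> N) : Prop :=
  (forall x y, D (x + y) = D x + D y) /\
  (forall r x, D (calg_str A r * x) = calg_str A r *: D x) /\
  (forall x y, D (x * y) = x *: D y + y *: D x).

Record kahler (A : calg) := Kahler {
  kmod : lmodType A;
  kd : A -> kmod;
  kd_der : is_mder kd;
  kd_univ : forall (N : lmodType A) (D : A -> N), is_mder D ->
    exists phi : kmod -> N, is_lin phi /\ forall a, phi (kd a) = D a;
  kd_uniq : forall (N : lmodType A) (phi psi : kmod -> N), is_lin phi -> is_lin psi ->
    (forall a, phi (kd a) = psi (kd a)) -> forall w, phi w = psi w }.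

Record tensor (A : calg) (U V : lmodType A) := Tensor {
  tsp : lmodType A;
  tm : U -> V -> tsp;
  tm_bil : is_bilin tm;
  tm_univ : forall (N : lmodType A) (b : U -> V -> N), is_bilin b ->
    exists phi : tsp -> N, is_lin phi /\ forall u v, phi (tm u v) = b u v;
  tm_uniq : forall (N : lmodType A) (phi psi : tsp -> N), is_lin phi -> is_lin psi ->
    (forall u v, phi (tm u v) = psi (tm u v)) -> forall w, phi w = psi w }.

Record ext2 (A : calg) (U : lmodType A) := Ext2 {
  esp : lmodType A;
  wedge : U -> U -> esp;
  wedge_bil : is_bilin wedge;
  wedge_alt : forall u, wedge u u = 0;
  wedge_univ : forall (N : lmodType A) (b : U -> U -> N), is_bilin b ->
    (forall u, b u u = 0) ->
    exists phi : esp -> N, is_lin phi /\ forall u v, phi (wedge u v) = b u v;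
  wedge_uniq : forall (N : lmodType A) (phi psi : esp -> N), is_lin phi -> is_lin psi ->
    (forall u v, phi (wedge u v) = psi (wedge u v)) -> forall w, phi w = psi w }.

Record symalg (A : calg) (M : lmodType A) := SymAlg {
  sym : calg;
  siA : A -> sym;
  siM : M -> sym;
  siA_alg : is_alg_map siA;
  siM_add : forall m1 m2, siM (m1 + m2) = siM m1 + siM m2;
  siM_scale : forall a m, siM (a *: m) = siA a * siM m;
  sym_univ : forall (C : calg) (f : A -> C) (g : M -> C), is_alg_map f ->
    (forall m1 m2, g (m1 + m2) = g m1 + g m2) -> (forall a m, g (a *: m) = f a * g m) ->
    exists h : sym -> C, is_alg_map h /\ (forall a, h (siA a) = f a) /\
                         (forall m, h (siM m) = g m);
  sym_uniq : forall (C : calg) (h1 h2 : sym -> C), is_alg_map h1 -> is_alg_map h2 ->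
    (forall a, h1 (siA a) = h2 (siA a)) -> (forall m, h1 (siM m) = h2 (siM m)) ->
    forall x, h1 x = h2 x }.

End Algebras.

Section Setting.
Variable R : comPzRingType.
Variable A : calg R.
Variable M : lmodType A.
Variable OA : kahler A.
Variable OAM : tensor (kmod OA) M.
Variable O2 : ext2 (kmod OA).
Variable O2M : tensor (esp O2) M.
Variable S : symalg M.
Variable OS : kahler (sym S).
Variable TS : symalg (kmod OS).               (* T(S_A(M)) = Sym(Omega(S_A(M))) *)
Variable OTS : kahler (sym TS).
Variable T2 : symalg (kmod OTS).              (* T^2(S_A(M)) = T(T(S_A(M))) *)

(* universal derivation d : B -> T(B) and d' : T(B) -> T^2(B), for B = S_A(M) *)
Definition dT (x : sym S) : sym TS := siM TS (kd OS x).
Definition dT2 (y : sym TS) : sym T2 := siM T2 (kd OTS y).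
Definition iT (x : sym S) : sym TS := siA TS x.
Definition iT2 (y : sym TS) : sym T2 := siA T2 y.

Definition is_connection (nabla : M -> tsp OAM) : Prop :=
  (forall m1 m2, nabla (m1 + m2) = nabla m1 + nabla m2) /\
  (forall r m, nabla (calg_str A r *: m) = calg_str A r *: nabla m) /\
  (forall a m, nabla (a *: m) = a *: nabla m + tm OAM (kd OA a) m).

Definition Knabla (nabla : M -> tsp OAM) : sym S -> sym TS :=
  the_obj (fun k : sym S -> sym TS =>
    is_alg_map k /\
    (forall a, k (siA S a) = iT (siA S a)) /\
    (forall m (s : seq (A * M)),
        nabla m = \sum_(p <- s) tm OAM (kd OA p.1) p.2 ->
        k (siM S m) = dT (siM S m) - \sum_(p <- s) iT (siM S p.2) * dT (siA S p.1)))
  (fun _ => 0).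

Definition Tmap (h : sym S -> sym TS) : sym TS -> sym T2 :=
  the_obj (fun f : sym TS -> sym T2 =>
    is_alg_map f /\ (forall x, f (iT x) = iT2 (h x)) /\ (forall x, f (dT x) = dT2 (h x)))
  (fun _ => 0).

Definition cflip : sym T2 -> sym T2 :=
  the_obj (fun f : sym T2 -> sym T2 =>
    is_alg_map f /\
    (forall b, f (iT2 (iT b)) = iT2 (iT b)) /\
    (forall b, f (iT2 (dT b)) = dT2 (iT b)) /\
    (forall b, f (dT2 (iT b)) = iT2 (dT b)) /\
    (forall b, f (dT2 (dT b)) = dT2 (dT b)))
  id.

Definition curvK (K : sym S -> sym TS) : sym S -> sym T2 :=
  the_obj (fun f : sym S -> sym T2 =>
    is_alg_map f /\
    (forall a, f (siA S a) = cflip (Tmap K (K (siA S a)))) /\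
    (forall m, f (siM S m) = cflip (Tmap K (K (siM S m))) - Tmap K (K (siM S m))))
  (fun _ => 0).

Definition flat (K : sym S -> sym TS) : Prop :=
  (forall a, curvK K (siA S a) = iT2 (iT (siA S a))) /\
  (forall m, curvK K (siM S m) = 0).

Definition curv (nabla : M -> tsp OAM) (m : M) : tsp O2M :=
  the_obj (fun v : tsp O2M =>
    forall s : seq (A * M * seq (A * M)),
      nabla m = \sum_(x <- s) tm OAM (kd OA x.1.1) x.1.2 ->
      (forall x, x \in s -> nabla x.1.2 = \sum_(y <- x.2) tm OAM (kd OA y.1) y.2) ->
      v = \sum_(x <- s) \sum_(y <- x.2) tm O2M (wedge O2 (kd OA x.1.1) (kd OA y.1)) y.2)
  0.

Definition psi : tsp O2M -> sym T2 :=
  the_obj (fun f : tsp O2M -> sym T2 =>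
    forall s : seq (A * A * M),
      f (\sum_(x <- s) tm O2M (wedge O2 (kd OA x.1.1) (kd OA x.1.2)) x.2) =
      \sum_(x <- s)
        (iT2 (iT (siM S x.2)) * iT2 (dT (siA S x.1.1)) * dT2 (iT (siA S x.1.2))
         - iT2 (iT (siM S x.2)) * dT2 (iT (siA S x.1.1)) * iT2 (dT (siA S x.1.2))))
  (fun _ => 0).

End Setting.

(* Every map in the statement is defined by [the_obj] from a characterising property, so
   the proof shows that each property is satisfiable and then computes on generators.
   Existence comes from universal properties: [K_nabla] is [m |-> d m - L (nabla m)] with
   [L (d a (x) m) = m d a], compatible with the module structure precisely because of the
   Leibniz rule of [nabla]; [T(h)] and the flip [c] exist because [T(B)] classifies
   derivations (for [c], through the dual numbers); [nabla^2] is well defined because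
   [nabla] extends to [Omega(A) (x) M] with values in a twisted product module.  On [m],
   both [C_K(m)] and [psi (nabla^2 m)] then evaluate to
   [sum_ij m_ij (d a_i d' a_ij - d' a_i d a_ij)], the other terms cancelling by
   commutativity of [T^2(S_A(M))]. *)

From HB Require Import structures.
From mathcomp Require Import all_boot all_algebra ring.
From Stdlib Require Import ClassicalEpsilon.

Set Implicit Arguments.
Unset Strict Implicit.
Unset Printing Implicit Defensive.

Import GRing.Theory.
Local Open Scope ring_scope.

Lemma the_objP (T : Type) (P : T -> Prop) (d : T) : (exists x, P x) -> P (the_obj P d).
Proof.
rewrite /the_obj => hP; case: excluded_middle_informative => // h.
exact: proj2_sig (constructive_indefinite_description _ h).
Qed.

Ltac apply_the_objP :=
  match goal with |- context [the_obj ?P ?d] => apply: (@the_objP _ P d) end.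

Section AdditiveFun.
Variables (U V : zmodType) (f : U -> V).
Hypothesis fD : {morph f : x y / x + y}.

Lemma addfun0 : f 0 = 0.
Proof. by apply: (addrI (f 0)); rewrite -fD !addr0. Qed.

Lemma addfunN x : f (- x) = - f x.
Proof. by apply: (addrI (f x)); rewrite -fD !subrr addfun0. Qed.

Lemma addfunB x y : f (x - y) = f x - f y.
Proof. by rewrite fD addfunN. Qed.

Lemma addfun_sum (I : Type) (s : seq I) (F : I -> U) :
  f (\sum_(i <- s) F i) = \sum_(i <- s) f (F i).
Proof. exact: (big_morph f fD addfun0). Qed.

End AdditiveFun.

Section AlgMaps.
Variable R : comPzRingType.
Implicit Types X Y Z : calg R.

Lemma algmapD X Y (f : X -> Y) : is_alg_map f -> {morph f : x y / x + y}.
Proof. by case. Qed.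

Lemma algmapM X Y (f : X -> Y) : is_alg_map f -> {morph f : x y / x * y}.
Proof. by case=> _ []. Qed.

Lemma algmap1 X Y (f : X -> Y) : is_alg_map f -> f 1 = 1.
Proof. by case=> _ [_ []]. Qed.

Lemma algmap_str X Y (f : X -> Y) : is_alg_map f -> forall r, f (calg_str X r) = calg_str Y r.
Proof. by case=> _ [_ []]. Qed.

Lemma algmapB X Y (f : X -> Y) : is_alg_map f -> forall x y, f (x - y) = f x - f y.
Proof. by move/algmapD/addfunB. Qed.

Lemma algmap_sum X Y (f : X -> Y) (I : Type) (s : seq I) (F : I -> X) :
  is_alg_map f -> f (\sum_(i <- s) F i) = \sum_(i <- s) f (F i).
Proof. by move/algmapD/addfun_sum. Qed.

Lemma algmap_comp X Y Z (f : X -> Y) (g : Y -> Z) :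
  is_alg_map f -> is_alg_map g -> is_alg_map (g \o f).
Proof.
move=> hf hg; split; [|split; [|split]] => [x y|x y||r] /=.
- by rewrite (algmapD hf) (algmapD hg).
- by rewrite (algmapM hf) (algmapM hg).
- by rewrite (algmap1 hf) (algmap1 hg).
- by rewrite (algmap_str hf) (algmap_str hg).
Qed.

Definition is_fder X Y (f : X -> Y) (D : X -> Y) : Prop :=
  {morph D : x y / x + y} /\ (forall r, D (calg_str X r) = 0) /\
  (forall x y, D (x * y) = f x * D y + f y * D x).

Lemma fder_comp X Y Z (h : X -> Y) (f : Y -> Z) (D : Y -> Z) :
  is_alg_map h -> is_fder f D -> is_fder (f \o h) (D \o h).
Proof.
move=> hh [DD [Dstr DM]]; split; [|split] => [x y|r|x y] /=.
- by rewrite (algmapD hh) DD.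
- by rewrite (algmap_str hh) Dstr.
- by rewrite (algmapM hh) DM.
Qed.

Lemma algmap_fder_comp X Y Z (f : X -> Y) (D : X -> Y) (g : Y -> Z) :
  is_alg_map g -> is_fder f D -> is_fder (g \o f) (g \o D).
Proof.
move=> hg [DD [Dstr DM]]; split; [|split] => [x y|r|x y] /=.
- by rewrite DD (algmapD hg).
- by rewrite Dstr (addfun0 (algmapD hg)).
- by rewrite DM (algmapD hg) !(algmapM hg).
Qed.

End AlgMaps.

Section Derivations.
Variables (R : comPzRingType) (X Y : calg R) (f : X -> Y) (D : X -> Y).
Hypothesis hD : is_fder f D.

Lemma fderD : {morph D : x y / x + y}.
Proof. by case: hD. Qed.

Lemma fderM x y : D (x * y) = f x * D y + f y * D x.
Proof. by case: hD => _ []. Qed.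

Lemma fder_str r : D (calg_str X r) = 0.
Proof. by case: hD => _ []. Qed.

Lemma fderB x y : D (x - y) = D x - D y.
Proof. exact: (addfunB fderD). Qed.

Lemma fder_sum (I : Type) (s : seq I) (F : I -> X) :
  D (\sum_(i <- s) F i) = \sum_(i <- s) D (F i).
Proof. exact: (addfun_sum fderD). Qed.

End Derivations.

Section LinearFun.
Variable K : pzRingType.

Lemma islinD (U V : lmodType K) (f : U -> V) : is_lin f -> {morph f : x y / x + y}.
Proof. by case. Qed.

Lemma islinZ (U V : lmodType K) (f : U -> V) : is_lin f -> forall a x, f (a *: x) = a *: f x.
Proof. by case. Qed.

Lemma is_lin_id (V : lmodType K) : is_lin (@id V).
Proof. by []. Qed.

Lemma is_lin0 (U V : lmodType K) : is_lin (fun _ : U => 0 : V).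
Proof. by split=> *; rewrite ?addr0 ?scaler0. Qed.

Lemma is_linD (U V : lmodType K) (f g : U -> V) :
  is_lin f -> is_lin g -> is_lin (fun x => f x + g x).
Proof.
move=> hf hg; split=> *; first by rewrite (islinD hf) (islinD hg) addrACA.
by rewrite (islinZ hf) (islinZ hg) scalerDr.
Qed.

End LinearFun.

Lemma is_linZ (K : comPzRingType) (U V : lmodType K) (f : U -> V) (b : K) :
  is_lin f -> is_lin (fun x => b *: f x).
Proof.
move=> hf; split=> *; first by rewrite (islinD hf) scalerDr.
by rewrite (islinZ hf) !scalerA mulrC.
Qed.

Section Kahler.
Variables (R : comPzRingType) (A : calg R) (O : kahler A).

Lemma kdD : {morph kd O : x y / x + y}.
Proof. by case: (kd_der O). Qed.

Lemma kd_strM r x : kd O (calg_str A r * x) = calg_str A r *: kd O x.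
Proof. by case: (kd_der O) => _ []. Qed.

Lemma kdM x y : kd O (x * y) = x *: kd O y + y *: kd O x.
Proof. by case: (kd_der O) => _ []. Qed.

Lemma kd_str r : kd O (calg_str A r) = 0.
Proof.
have kd1 : kd O 1 = 0.
  have := kdM 1 1; rewrite mulr1 scale1r => h.
  by apply: (addrI (kd O 1)); rewrite addr0 -h.
by rewrite -[calg_str A r]mulr1 kd_strM kd1 scaler0.
Qed.

Lemma kd_fder (T : symalg (kmod O)) : is_fder (siA T) (siM T \o kd O).
Proof.
split; [|split] => [x y|r|x y] /=.
- by rewrite kdD siM_add.
- by rewrite kd_str (addfun0 (@siM_add _ _ _ T)).
- by rewrite kdM siM_add !siM_scale.
Qed.

End Kahler.

(* Restriction of scalars: [Y] as an [X]-module through [f].  Universal properties of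
   Kaehler modules and tensor products produce maps into algebras through it. *)
Section RestrictScalars.
Variables (R : comPzRingType) (X Y : calg R) (f : X -> Y).

Definition resmod of is_alg_map f : Type := Y.

Variable hf : is_alg_map f.

HB.instance Definition _ := GRing.Zmodule.on (resmod hf).

Definition resmod_scale (a : X) (y : resmod hf) : resmod hf := (f a * (y : Y) : Y).

Fact resmod_scaleA a b y : resmod_scale a (resmod_scale b y) = resmod_scale (a * b) y.
Proof. by rewrite /resmod_scale (algmapM hf) mulrA. Qed.

Fact resmod_scale1 : left_id 1 resmod_scale.
Proof. by move=> y; rewrite /resmod_scale (algmap1 hf) mul1r. Qed.

Fact resmod_scaleDr : right_distributive resmod_scale +%R.
Proof. by move=> a y z; rewrite /resmod_scale mulrDr. Qed.

Fact resmod_scaleDl y : {morph resmod_scale ^~ y : a b / a + b}.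
Proof. by move=> a b; rewrite /resmod_scale (algmapD hf) mulrDl. Qed.

HB.instance Definition _ := GRing.Zmodule_isLmodule.Build X (resmod hf)
  resmod_scaleA resmod_scale1 resmod_scaleDr resmod_scaleDl.

Lemma resmodZ a (y : resmod hf) : a *: y = (f a * (y : Y) : Y).
Proof. by []. Qed.

Lemma kahler_lift (O : kahler X) (D : X -> Y) : is_fder f D ->
  exists phi : kmod O -> resmod hf, is_lin phi /\ forall x, phi (kd O x) = D x.
Proof.
case=> DD [Dstr DM]; apply: kd_univ; split; [|split] => [x y|r x|x y].
- exact: DD.
- by rewrite resmodZ DM Dstr mulr0 addr0.
- by rewrite !resmodZ DM.
Qed.

(* The universal property of [T(X) = Sym(Omega(X))]: it classifies derivations. *)
Lemma tangent_lift (O : kahler X) (T : symalg (kmod O)) (D : X -> Y) : is_fder f D ->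
  exists F : sym T -> Y, is_alg_map F /\
    (forall x, F (siA T x) = f x) /\ (forall x, F (siM T (kd O x)) = D x).
Proof.
move=> hD; have [phi [lin_phi phi_kd]] := kahler_lift O hD.
have [F [hF [F_A F_M]]] := sym_univ T hf (islinD lin_phi) (islinZ lin_phi).
by exists F; split=> //; split=> // x; rewrite F_M phi_kd.
Qed.

End RestrictScalars.

Section DualNumbers.
Variable B : comPzRingType.

Definition dualnum : Type := (B * B)%type.
HB.instance Definition _ := GRing.Zmodule.on dualnum.

Definition dual_mul (x y : dualnum) : dualnum := (x.1 * y.1, x.1 * y.2 + x.2 * y.1).

Fact dual_mulA : associative dual_mul.
Proof. by move=> [a b] [c d] [e g]; congr pair => /=; ring. Qed.

Fact dual_mulC : commutative dual_mul.
Proof. by move=> [a b] [c d]; congr pair => /=; ring. Qed.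

Fact dual_mul1 : left_id ((1, 0) : dualnum) dual_mul.
Proof. by move=> [a b]; congr pair => /=; ring. Qed.

Fact dual_mulDl : left_distributive dual_mul +%R.
Proof. by move=> [a b] [c d] [e g]; congr pair => /=; ring. Qed.

HB.instance Definition _ :=
  GRing.Zmodule_isComPzRing.Build dualnum dual_mulA dual_mulC dual_mul1 dual_mulDl.

End DualNumbers.

Section DualAlgebra.
Variables (R : comPzRingType) (B : calg R).

Definition dual_str (r : R) : dualnum B := (calg_str B r, 0).

Fact dual_str_zmod : zmod_morphism dual_str.
Proof. by move=> x y; rewrite /dual_str rmorphB; congr pair; rewrite subr0. Qed.
HB.instance Definition _ := GRing.isZmodMorphism.Build R (dualnum B) dual_str dual_str_zmod.

Fact dual_str_monoid : monoid_morphism dual_str.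
Proof.
split=> [|x y]; first by rewrite /dual_str rmorph1.
by rewrite /dual_str rmorphM; congr pair => /=; ring.
Qed.
HB.instance Definition _ := GRing.isMonoidMorphism.Build R (dualnum B) dual_str dual_str_monoid.

Definition dual_calg : calg R := CAlg dual_str.

Lemma dualM (x y : dual_calg) : x * y = (x.1 * y.1, x.1 * y.2 + x.2 * y.1) :> B * B.
Proof. by []. Qed.

Variable X : calg R.

Lemma dual_algmap (f : X -> B) (D : X -> B) : is_alg_map f -> is_fder f D ->
  is_alg_map (fun x => (f x, D x) : dual_calg).
Proof.
move=> hf [DD [Dstr DM]]; split; [|split; [|split]] => [x y|x y||r] /=.
- by rewrite (algmapD hf) DD.
- by rewrite dualM /= (algmapM hf) DM [D x * _]mulrC.
- by rewrite -(rmorph1 (calg_str X)) Dstr (algmap_str hf) rmorph1.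
- by rewrite (algmap_str hf) Dstr.
Qed.

Lemma dual_fst_algmap (F : X -> dual_calg) : is_alg_map F -> is_alg_map (fun x => (F x).1).
Proof.
move=> hF; split; [|split; [|split]] => [x y|x y||r] /=.
- by rewrite (algmapD hF).
- by rewrite (algmapM hF).
- by rewrite (algmap1 hF).
- by rewrite (algmap_str hF).
Qed.

Lemma dual_snd_fder (F : X -> dual_calg) : is_alg_map F ->
  is_fder (fun x => (F x).1) (fun x => (F x).2).
Proof.
move=> hF; split; [|split] => [x y|r|x y] /=.
- by rewrite (algmapD hF).
- by rewrite (algmap_str hF).
- by rewrite (algmapM hF) dualM /= [(F x).2 * _]mulrC.
Qed.

End DualAlgebra.

Section Submodules.
Variables (K : pzRingType) (V : lmodType K).

Record submodule := Submodule {
  smem :> V -> Prop;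
  smem0 : smem 0;
  smemD : forall u v, smem u -> smem v -> smem (u + v);
  smemZ : forall a u, smem u -> smem (a *: u) }.

Definition submodule_pred (P : submodule) : pred V :=
  fun v => if excluded_middle_informative (P v) then true else false.

Lemma submodule_predP (P : submodule) v : reflect (P v) (submodule_pred P v).
Proof. by rewrite /submodule_pred; case: excluded_middle_informative => h; constructor. Qed.

Fact submodule_closed (P : submodule) : GRing.subsemimod_closed (submodule_pred P).
Proof.
split; [split|] => [|u v /submodule_predP Pu /submodule_predP Pv|a u /submodule_predP Pu].
- exact/submodule_predP/smem0.
- exact/submodule_predP/smemD.
- exact/submodule_predP/smemZ.
Qed.

End Submodules.

HB.instance Definition _ (K : pzRingType) (V : lmodType K) (P : submodule V) :=
  GRing.isSubmodClosed.Build K V (submodule_pred P) (submodule_closed P).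

Definition submodule_type (K : pzRingType) (V : lmodType K) (P : submodule V) :=
  {v : V | submodule_pred P v}.
HB.instance Definition _ (K : pzRingType) (V : lmodType K) (P : submodule V) :=
  [isSub for (@sval V (submodule_pred P) : submodule_type P -> V)].
HB.instance Definition _ (K : pzRingType) (V : lmodType K) (P : submodule V) :=
  [Choice of submodule_type P by <:].
HB.instance Definition _ (K : pzRingType) (V : lmodType K) (P : submodule V) :=
  [SubChoice_isSubLmodule of submodule_type P by <:].

Section Bilinear.
Variables (R : comPzRingType) (A : calg R).

Section Tensor.
Variables (U V : lmodType A) (T : tensor U V).

Lemma tmDl v : {morph tm T ^~ v : u1 u2 / u1 + u2}.
Proof. by case: (tm_bil T) => h _ u1 u2; apply: h. Qed.

Lemma tmDr u : {morph tm T u : v1 v2 / v1 + v2}.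
Proof. by case: (tm_bil T) => _ [h _]; apply: h. Qed.

Lemma tmZl a u v : tm T (a *: u) v = a *: tm T u v.
Proof. by case: (tm_bil T) => _ [_ []]. Qed.

Lemma tmZr a u v : tm T u (a *: v) = a *: tm T u v.
Proof. by case: (tm_bil T) => _ [_ []]. Qed.

Lemma tm0l v : tm T 0 v = 0.
Proof. exact: addfun0 (tmDl v). Qed.

Lemma tmNl u v : tm T (- u) v = - tm T u v.
Proof. exact: (addfunN (tmDl v)). Qed.

End Tensor.

Section Exterior.
Variables (U : lmodType A) (E : ext2 U).

Lemma wedgeDl v : {morph wedge E ^~ v : u1 u2 / u1 + u2}.
Proof. by case: (wedge_bil E) => h _ u1 u2; apply: h. Qed.

Lemma wedgeDr u : {morph wedge E u : v1 v2 / v1 + v2}.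
Proof. by case: (wedge_bil E) => _ [h _]; apply: h. Qed.

Lemma wedgeZl a u v : wedge E (a *: u) v = a *: wedge E u v.
Proof. by case: (wedge_bil E) => _ [_ []]. Qed.

Lemma wedgeZr a u v : wedge E u (a *: v) = a *: wedge E u v.
Proof. by case: (wedge_bil E) => _ [_ []]. Qed.

Lemma wedge0l v : wedge E 0 v = 0.
Proof. exact: addfun0 (wedgeDl v). Qed.

Lemma wedgeC u v : wedge E v u = - wedge E u v.
Proof.
apply/eqP; rewrite -addr_eq0; apply/eqP.
by have := wedge_alt E (u + v); rewrite wedgeDl !wedgeDr !wedge_alt add0r addr0 addrC.
Qed.

End Exterior.
End Bilinear.

Section Spans.
Variables (R : comPzRingType) (A : calg R).

Lemma tensor_span (U V : lmodType A) (T : tensor U V) (P : submodule (tsp T)) :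
  (forall u v, P (tm T u v)) -> forall w, P w.
Proof.
move=> P_tm w.
pose b u v : submodule_type P := Sub (tm T u v) (introT (submodule_predP _ _) (P_tm u v)).
have b_bil : is_bilin b.
  by split; [|split; [|split]] => *; apply: val_inj;
    rewrite /= ?raddfD ?linearZ /= ?SubK ?tmDl ?tmDr ?tmZl ?tmZr.
have [phi [lin_phi phi_tm]] := tm_univ T b_bil.
have val_phi : is_lin (val \o phi).
  by split=> * /=; rewrite ?(islinD lin_phi) ?(islinZ lin_phi) ?raddfD ?linearZ.
rewrite -(tm_uniq val_phi (@is_lin_id _ _) _ w) => [|u v] /=.
  exact/submodule_predP/(valP (phi w)).
by rewrite phi_tm SubK.
Qed.

Lemma kahler_span (O : kahler A) (P : submodule (kmod O)) :
  (forall a, P (kd O a)) -> forall w, P w.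
Proof.
move=> P_kd w.
pose D a : submodule_type P := Sub (kd O a) (introT (submodule_predP _ _) (P_kd a)).
have D_der : is_mder D.
  by split; [|split] => *; apply: val_inj;
    rewrite /= ?raddfD ?linearZ /= ?SubK ?kdD ?kd_strM ?kdM.
have [phi [lin_phi phi_kd]] := kd_univ O D_der.
have val_phi : is_lin (val \o phi).
  by split=> * /=; rewrite ?(islinD lin_phi) ?(islinZ lin_phi) ?raddfD ?linearZ.
rewrite -(kd_uniq val_phi (@is_lin_id _ _) _ w) => [|a] /=.
  exact/submodule_predP/(valP (phi w)).
by rewrite phi_kd SubK.
Qed.

Lemma kahler_repr (O : kahler A) (w : kmod O) :
  exists s : seq (A * A), w = \sum_(p <- s) p.1 *: kd O p.2.
Proof.
pose P w := exists s : seq (A * A), w = \sum_(p <- s) p.1 *: kd O p.2.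
have P0 : P 0 by exists [::]; rewrite big_nil.
have PD u v : P u -> P v -> P (u + v).
  by move=> [s1 ->] [s2 ->]; exists (s1 ++ s2); rewrite big_cat.
have PZ a u : P u -> P (a *: u).
  move=> [s ->]; exists [seq (a * p.1, p.2) | p <- s].
  by rewrite big_map scaler_sumr; apply: eq_bigr => p _; rewrite scalerA.
apply: (kahler_span (P := Submodule P0 PD PZ)) => a.
by exists [:: (1, a)]; rewrite big_seq1 scale1r.
Qed.

Lemma tensor_kahler_repr (O : kahler A) (V : lmodType A) (T : tensor (kmod O) V) (w : tsp T) :
  exists s : seq (A * V), w = \sum_(p <- s) tm T (kd O p.1) p.2.
Proof.
pose P w := exists s : seq (A * V), w = \sum_(p <- s) tm T (kd O p.1) p.2.
have P0 : P 0 by exists [::]; rewrite big_nil.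
have PD u v : P u -> P v -> P (u + v).
  by move=> [s1 ->] [s2 ->]; exists (s1 ++ s2); rewrite big_cat.
have PZ a u : P u -> P (a *: u).
  move=> [s ->]; exists [seq (p.1, a *: p.2) | p <- s].
  by rewrite big_map scaler_sumr; apply: eq_bigr => p _; rewrite tmZr.
apply: (tensor_span (P := Submodule P0 PD PZ)) => u v.
have [s ->] := kahler_repr u.
exists [seq (p.2, p.1 *: v) | p <- s]; rewrite big_map.
rewrite (addfun_sum (tmDl T v)).
by apply: eq_bigr => p _; rewrite tmZl tmZr.
Qed.

End Spans.

Lemma seq_choice (T U : eqType) (P : T -> U -> Prop) (s : seq T) :
  (forall x, exists y, P x y) ->
  exists t : seq (T * U), map fst t = s /\ forall z, z \in t -> P z.1 z.2.
Proof.
move=> hP; elim: s => [|x s [t [t_s Pt]]]; first by exists [::].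
have [y Pxy] := hP x; exists ((x, y) :: t); split; first by rewrite /= t_s.
by move=> z; rewrite inE => /predU1P [-> //|]; apply: Pt.
Qed.

Record twisting (K : comPzRingType) := Twisting {
  tw_dom : lmodType K;
  tw_cod : lmodType K;
  tw_op : K -> tw_dom -> tw_cod;
  tw_opDl : forall a b x, tw_op (a + b) x = tw_op a x + tw_op b x;
  tw_opM : forall a b x, tw_op (a * b) x = a *: tw_op b x + b *: tw_op a x;
  tw_opDr : forall a, {morph tw_op a : x y / x + y};
  tw_opZr : forall a b x, tw_op a (b *: x) = b *: tw_op a x }.
Arguments tw_op {K} t.
Arguments tw_opDl {K} t.
Arguments tw_opM {K} t.
Arguments tw_opDr {K} t.
Arguments tw_opZr {K} t.

Section Twisted.
Variables (K : comPzRingType) (t : twisting K).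

Definition twisted : Type := (tw_dom t * tw_cod t)%type.
HB.instance Definition _ := GRing.Zmodule.on twisted.

Definition twisted_scale (a : K) (v : twisted) : twisted :=
  (a *: v.1, a *: v.2 - tw_op t a v.1).

Lemma tw_op1 x : tw_op t 1 x = 0.
Proof.
have := tw_opM t 1 1 x; rewrite mulr1 scale1r => h.
by apply: (addrI (tw_op t 1 x)); rewrite addr0 -h.
Qed.

Fact twisted_scaleA a b v : twisted_scale a (twisted_scale b v) = twisted_scale (a * b) v.
Proof.
rewrite /twisted_scale /=; congr pair; first by rewrite scalerA.
by rewrite tw_opM tw_opZr scalerBr scalerA opprD addrA.
Qed.

Fact twisted_scale1 : left_id 1 twisted_scale.
Proof. by case=> x y; rewrite /twisted_scale /= !scale1r tw_op1 subr0. Qed.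

Fact twisted_scaleDr : right_distributive twisted_scale +%R.
Proof.
move=> a [x y] [x' y']; rewrite /twisted_scale /=; congr pair; first by rewrite scalerDr.
by rewrite scalerDr tw_opDr opprD addrACA.
Qed.

Fact twisted_scaleDl v : {morph twisted_scale ^~ v : a b / a + b}.
Proof.
move=> a b; rewrite /twisted_scale /=; congr pair; first by rewrite scalerDl.
by rewrite scalerDl tw_opDl opprD addrACA.
Qed.

HB.instance Definition _ := GRing.Zmodule_isLmodule.Build K twisted
  twisted_scaleA twisted_scale1 twisted_scaleDr twisted_scaleDl.

Lemma twistedZ a (v : twisted) :
  a *: v = (a *: v.1, a *: v.2 - tw_op t a v.1) :> tw_dom t * tw_cod t.
Proof. by []. Qed.

End Twisted.


Section Tangent.
Variables (R : comPzRingType) (A : calg R) (M : lmodType A) (S : symalg M)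
  (OS : kahler (sym S)) (TS : symalg (kmod OS)) (OTS : kahler (sym TS))
  (T2 : symalg (kmod OTS)).

Lemma iT_alg : is_alg_map (iT TS).
Proof. exact: siA_alg. Qed.

Lemma iT2_alg : is_alg_map (iT2 T2).
Proof. exact: siA_alg. Qed.

Lemma dT_fder : is_fder (iT TS) (dT TS).
Proof. exact: kd_fder. Qed.

Lemma dT2_fder : is_fder (iT2 T2) (dT2 T2).
Proof. exact: kd_fder. Qed.

Lemma Tmap_spec (h : sym S -> sym TS) : is_alg_map h ->
  is_alg_map (Tmap T2 h) /\ (forall x, Tmap T2 h (iT TS x) = iT2 T2 (h x)) /\
  (forall x, Tmap T2 h (dT TS x) = dT2 T2 (h x)).
Proof.
move=> hh; rewrite /Tmap; apply_the_objP.
exact: (tangent_lift (algmap_comp hh (siA_alg T2)) TS (fder_comp hh dT2_fder)).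
Qed.

Local Notation c := (@cflip R A M S OS TS OTS T2).

Lemma cflip_spec : is_alg_map c /\
  (forall b, c (iT2 T2 (iT TS b)) = iT2 T2 (iT TS b)) /\
  (forall b, c (iT2 T2 (dT TS b)) = dT2 T2 (iT TS b)) /\
  (forall b, c (dT2 T2 (iT TS b)) = iT2 T2 (dT TS b)) /\
  (forall b, c (dT2 T2 (dT TS b)) = dT2 T2 (dT TS b)).
Proof.
rewrite /cflip; apply_the_objP.
pose f0 b : dual_calg (sym T2) := (iT2 T2 (iT TS b), iT2 T2 (dT TS b)).
have f0_alg : is_alg_map f0.
  exact: dual_algmap (algmap_comp iT_alg iT2_alg) (algmap_fder_comp iT2_alg dT_fder).
pose D0 b : dual_calg (sym T2) := (dT2 T2 (iT TS b), dT2 T2 (dT TS b)).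
have D0_fder : is_fder f0 D0.
  split; [|split] => [x y|r|x y]; rewrite /D0 /f0.
  - by rewrite (algmapD iT_alg) !(fderD dT_fder) !(fderD dT2_fder).
  - by rewrite (algmap_str iT_alg) (fder_str dT_fder) (fder_str dT2_fder) (addfun0 (fderD dT2_fder)).
  - rewrite (algmapM iT_alg) (fderM dT_fder) (fderD dT2_fder) !(fderM dT2_fder).
    by apply: injective_projections; rewrite /= ?dualM /=; ring.
have [F [F_alg [F_iT F_dT]]] := tangent_lift f0_alg TS D0_fder.
have [flip [flip_alg [flip_iT2 flip_dT2]]] :=
  tangent_lift (dual_fst_algmap F_alg) T2 (dual_snd_fder F_alg).
exists flip; split=> //.
by rewrite /iT2 /dT2; split; [|split; [|split]] => b;
  rewrite ?flip_iT2 ?flip_dT2 /iT /dT ?F_iT ?F_dT.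
Qed.

Lemma cflip_alg : is_alg_map c.
Proof. by case: cflip_spec. Qed.

Lemma cflip_i2 b : c (iT2 T2 (iT TS b)) = iT2 T2 (iT TS b).
Proof. by case: cflip_spec => _ []. Qed.

Lemma cflip_d b : c (iT2 T2 (dT TS b)) = dT2 T2 (iT TS b).
Proof. by case: cflip_spec => _ [_ []]. Qed.

Lemma cflip_d' b : c (dT2 T2 (iT TS b)) = iT2 T2 (dT TS b).
Proof. by case: cflip_spec => _ [_ [_ []]]. Qed.

Lemma cflip_dd' b : c (dT2 T2 (dT TS b)) = dT2 T2 (dT TS b).
Proof. by case: cflip_spec => _ [_ [_ []]]. Qed.

End Tangent.

Section Connection.
Variables (R : comPzRingType) (A : calg R) (M : lmodType A)
  (OA : kahler A) (OAM : tensor (kmod OA) M)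
  (O2 : ext2 (kmod OA)) (O2M : tensor (esp O2) M)
  (S : symalg M) (OS : kahler (sym S)) (TS : symalg (kmod OS))
  (OTS : kahler (sym TS)) (T2 : symalg (kmod OTS))
  (nabla : M -> tsp OAM).
Hypothesis nabla_conn : is_connection nabla.

Local Notation K := (Knabla TS nabla).
Local Notation TK := (Tmap T2 K).
Local Notation c := (@cflip R A M S OS TS OTS T2).
Local Notation i2 b := (iT2 T2 (iT TS b)).
Local Notation d b := (iT2 T2 (dT TS b)).
Local Notation d' b := (dT2 T2 (iT TS b)).
Local Notation dd' b := (dT2 T2 (dT TS b)).

Lemma nablaD : {morph nabla : m1 m2 / m1 + m2}.
Proof. by case: nabla_conn. Qed.

Lemma nablaZ a m : nabla (a *: m) = a *: nabla m + tm OAM (kd OA a) m.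
Proof. by case: nabla_conn => _ []. Qed.

Lemma siA_iT_alg : is_alg_map (iT TS \o siA S).
Proof. exact: algmap_comp (siA_alg S) (siA_alg TS). Qed.

Lemma Kcorrection_exists : exists L : tsp OAM -> resmod siA_iT_alg, is_lin L /\
  forall a m, L (tm OAM (kd OA a) m) = (iT TS (siM S m) * dT TS (siA S a) : sym TS).
Proof.
have [lam [lin_lam lam_kd]] := kahler_lift siA_iT_alg OA (fder_comp (siA_alg S) (dT_fder TS)).
have b_bil : is_bilin (fun w (m : M) => (iT TS (siM S m) * lam w : resmod siA_iT_alg)).
  split; [|split; [|split]] => *.
  - by rewrite (islinD lin_lam) mulrDr.
  - by rewrite siM_add (algmapD (iT_alg TS)) mulrDl.
  - by rewrite (islinZ lin_lam) !resmodZ mulrCA.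
  - by rewrite resmodZ siM_scale (algmapM (iT_alg TS)) mulrA.
have [L [lin_L L_tm]] := tm_univ OAM b_bil.
by exists L; split=> // a m; rewrite L_tm lam_kd.
Qed.

Lemma Knabla_spec : is_alg_map K /\ (forall a, K (siA S a) = iT TS (siA S a)) /\
  (forall m (s : seq (A * M)), nabla m = \sum_(p <- s) tm OAM (kd OA p.1) p.2 ->
     K (siM S m) = dT TS (siM S m) - \sum_(p <- s) iT TS (siM S p.2) * dT TS (siA S p.1)).
Proof.
rewrite /Knabla; apply_the_objP.
have [L [lin_L L_tm]] := Kcorrection_exists.
pose g m := dT TS (siM S m) - (L (nabla m) : sym TS).
have gD : {morph g : m1 m2 / m1 + m2}.
  by move=> m1 m2; rewrite /g siM_add (fderD (dT_fder TS)) nablaD (islinD lin_L) opprD addrACA.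
have gZ a m : g (a *: m) = iT TS (siA S a) * g m.
  rewrite /g siM_scale (fderM (dT_fder TS)) nablaZ (islinD lin_L) (islinZ lin_L) resmodZ L_tm /=.
  by rewrite mulrBr opprD addrA addrAC [iT TS (siM S m) * _]mulrC addrK.
have [k [k_alg [k_A k_M]]] := sym_univ S siA_iT_alg gD gZ.
exists k; split=> //; split=> // m s nabla_m.
rewrite k_M /g nabla_m (addfun_sum (islinD lin_L)); congr (_ - _).
by apply: eq_bigr => p _; rewrite L_tm.
Qed.

Lemma K_alg : is_alg_map K.
Proof. by case: Knabla_spec. Qed.

Lemma K_siA a : K (siA S a) = iT TS (siA S a).
Proof. by case: Knabla_spec => _ []. Qed.

Lemma K_siM m (s : seq (A * M)) : nabla m = \sum_(p <- s) tm OAM (kd OA p.1) p.2 ->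
  K (siM S m) = dT TS (siM S m) - \sum_(p <- s) iT TS (siM S p.2) * dT TS (siA S p.1).
Proof. by case: Knabla_spec => _ [_]; apply. Qed.

Lemma TK_alg : is_alg_map TK.
Proof. by case: (Tmap_spec T2 K_alg). Qed.

Lemma TK_iT x : TK (iT TS x) = iT2 T2 (K x).
Proof. by case: (Tmap_spec T2 K_alg) => _ []. Qed.

Lemma TK_dT x : TK (dT TS x) = dT2 T2 (K x).
Proof. by case: (Tmap_spec T2 K_alg) => _ []. Qed.

Lemma cflip_TK_K_siA a : c (TK (K (siA S a))) = i2 (siA S a).
Proof. by rewrite K_siA TK_iT K_siA cflip_i2. Qed.

Lemma curvK_spec : is_alg_map (curvK T2 K) /\
  (forall a, curvK T2 K (siA S a) = c (TK (K (siA S a)))) /\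
  (forall m, curvK T2 K (siM S m) = c (TK (K (siM S m))) - TK (K (siM S m))).
Proof.
rewrite /curvK; apply_the_objP.
pose g m := c (TK (K (siM S m))) - TK (K (siM S m)).
have gD : {morph g : m1 m2 / m1 + m2}.
  move=> m1 m2; rewrite /g siM_add (algmapD K_alg) (algmapD TK_alg) (algmapD (cflip_alg T2)).
  by rewrite opprD addrACA.
have gZ a m : g (a *: m) = i2 (siA S a) * g m.
  rewrite /g siM_scale (algmapM K_alg) (algmapM TK_alg) (algmapM (cflip_alg T2)).
  by rewrite cflip_TK_K_siA K_siA TK_iT K_siA mulrBr.
have iA_alg := algmap_comp (algmap_comp (siA_alg S) (iT_alg TS)) (iT2_alg T2).
have [f [f_alg [f_A f_M]]] := sym_univ S iA_alg gD gZ.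
by exists f; split=> //; split=> [a|m]; rewrite ?f_A ?f_M ?cflip_TK_K_siA.
Qed.

Lemma curvK_siA a : curvK T2 K (siA S a) = i2 (siA S a).
Proof. by case: curvK_spec => _ [-> _]; rewrite cflip_TK_K_siA. Qed.

Lemma curvK_siM m : curvK T2 K (siM S m) = c (TK (K (siM S m))) - TK (K (siM S m)).
Proof. by case: curvK_spec => _ []. Qed.

Definition psi_term (a b : A) (m : M) : sym T2 :=
  i2 (siM S m) * d (siA S a) * d' (siA S b) - i2 (siM S m) * d' (siA S a) * d (siA S b).

Lemma psi_spec (s : seq (A * A * M)) :
  psi T2 (\sum_(x <- s) tm O2M (wedge O2 (kd OA x.1.1) (kd OA x.1.2)) x.2) =
  \sum_(x <- s) psi_term x.1.1 x.1.2 x.2.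
Proof.
move: s; rewrite /psi; apply_the_objP.
have iA_alg := algmap_comp (algmap_comp (siA_alg S) (iT_alg TS)) (iT2_alg T2).
have [l [lin_l l_kd]] :=
  kahler_lift iA_alg OA (algmap_fder_comp (iT2_alg T2) (fder_comp (siA_alg S) (dT_fder TS))).
have [l' [lin_l' l'_kd]] :=
  kahler_lift iA_alg OA (fder_comp (algmap_comp (siA_alg S) (iT_alg TS)) (dT2_fder T2)).
pose b u v : resmod iA_alg := l u * l' v - l' u * l v.
have b_bil : is_bilin b.
  split; [|split; [|split]] => *; rewrite /b ?(islinD lin_l) ?(islinD lin_l')
    ?(islinZ lin_l) ?(islinZ lin_l') ?resmodZ; ring.
have b_alt u : b u u = 0 by rewrite /b mulrC subrr.
have [w [lin_w w_wedge]] := wedge_univ O2 b_bil b_alt.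
have b2_bil : is_bilin (fun t (m : M) => i2 (siM S m) * w t : resmod iA_alg).
  split; [|split; [|split]] => *.
  - by rewrite (islinD lin_w) mulrDr.
  - by rewrite siM_add (algmapD (iT_alg TS)) (algmapD (iT2_alg T2)) mulrDl.
  - by rewrite (islinZ lin_w) !resmodZ mulrCA.
  - by rewrite resmodZ siM_scale (algmapM (iT_alg TS)) (algmapM (iT2_alg T2)) mulrA.
have [p [lin_p p_tm]] := tm_univ O2M b2_bil.
exists p => s; rewrite (addfun_sum (islinD lin_p)); apply: eq_bigr => x _.
by rewrite p_tm w_wedge /b !l_kd !l'_kd /psi_term /=; ring.
Qed.

Lemma psi0 : psi T2 (0 : tsp O2M) = 0.
Proof. by have := psi_spec [::]; rewrite !big_nil. Qed.

Definition dwedge_spec (a : A) (f : tsp OAM -> tsp O2M) : Prop :=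
  is_lin f /\ forall w n, f (tm OAM w n) = tm O2M (wedge O2 (kd OA a) w) n.

Definition dwedge (a : A) : tsp OAM -> tsp O2M := the_obj (dwedge_spec a) (fun _ => 0).

Lemma dwedgeP a : dwedge_spec a (dwedge a).
Proof.
rewrite /dwedge; apply_the_objP; apply: tm_univ.
by split; [|split; [|split]] => *; rewrite ?wedgeDr ?tmDl ?tmDr ?wedgeZr ?tmZl ?tmZr.
Qed.

Lemma dwedge_lin a : is_lin (dwedge a).
Proof. by case: (dwedgeP a). Qed.

Lemma dwedge_tm a w n : dwedge a (tm OAM w n) = tm O2M (wedge O2 (kd OA a) w) n.
Proof. by case: (dwedgeP a). Qed.

Lemma dwedgeDr a : {morph dwedge a : x y / x + y}.
Proof. exact: (islinD (dwedge_lin a)). Qed.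

Lemma dwedgeZr a b x : dwedge a (b *: x) = b *: dwedge a x.
Proof. exact: (islinZ (dwedge_lin a)). Qed.

Lemma dwedgeDl a b x : dwedge (a + b) x = dwedge a x + dwedge b x.
Proof.
apply: (tm_uniq (dwedge_lin _) (is_linD (dwedge_lin a) (dwedge_lin b))) => w n.
by rewrite !dwedge_tm kdD wedgeDl tmDl.
Qed.

Lemma dwedgeM a b x : dwedge (a * b) x = a *: dwedge b x + b *: dwedge a x.
Proof.
have lin_rhs := is_linD (is_linZ a (dwedge_lin b)) (is_linZ b (dwedge_lin a)).
apply: (tm_uniq (dwedge_lin _) lin_rhs) => w n.
by rewrite !dwedge_tm kdM wedgeDl tmDl !wedgeZl !tmZl.
Qed.

Lemma dwedge_str r x : dwedge (calg_str A r) x = 0.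
Proof.
apply: (tm_uniq (dwedge_lin _) (is_lin0 _ _)) => w n.
by rewrite dwedge_tm kd_str wedge0l tm0l.
Qed.

Lemma dwedge_kdC a b n : dwedge a (tm OAM (kd OA b) n) = - dwedge b (tm OAM (kd OA a) n).
Proof. by rewrite !dwedge_tm wedgeC tmNl. Qed.

Definition dwedge_twisting : twisting A :=
  Twisting dwedgeDl dwedgeM dwedgeDr dwedgeZr.

Local Notation twM := (twisted dwedge_twisting).

(* A derivation only for the twisted scaling, which absorbs the Leibniz terms of [d]
   and [nabla]. *)
Definition conn_pair (m : M) (a : A) : twM := (tm OAM (kd OA a) m, dwedge a (nabla m)).

Lemma conn_pair_der m : is_mder (conn_pair m).
Proof.
split; [|split] => [x y|r x|x y]; rewrite /conn_pair ?twistedZ /=.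
- by rewrite kdD tmDl dwedgeDl.
- by rewrite kd_strM tmZl dwedgeM !dwedge_str scaler0 addr0 subr0.
- rewrite kdM tmDl !tmZl dwedgeM; congr pair.
  by rewrite dwedge_kdC opprK addrACA subrr addr0.
Qed.

Definition conn_ext (m : M) : kmod OA -> twM := the_obj (fun f : kmod OA -> twM =>
  is_lin f /\ forall a, f (kd OA a) = conn_pair m a) (fun _ => 0).

Lemma conn_extP m : is_lin (conn_ext m) /\ forall a, conn_ext m (kd OA a) = conn_pair m a.
Proof. by rewrite /conn_ext; apply_the_objP; apply: kd_univ (conn_pair_der m). Qed.

Lemma conn_ext_bil : is_bilin (fun w m => conn_ext m w).
Proof.
have lin m := proj1 (conn_extP m); have ext_kd m := proj2 (conn_extP m).
split; [|split; [|split]] => [w1 w2 m|w m1 m2|a w m|a w m].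
- exact: (islinD (lin m)).
- apply: (kd_uniq (lin _) (is_linD (lin m1) (lin m2))) => a.
  by rewrite !ext_kd /conn_pair tmDr nablaD dwedgeDr.
- exact: (islinZ (lin m)).
- apply: (kd_uniq (lin _) (is_linZ a (lin m))) => b.
  by rewrite !ext_kd /conn_pair twistedZ /= tmZr nablaZ dwedgeDr dwedgeZr dwedge_kdC.
Qed.

Definition nabla_repr2 (m : M) (s : seq (A * M * seq (A * M))) : Prop :=
  nabla m = \sum_(x <- s) tm OAM (kd OA x.1.1) x.1.2 /\
  forall x, x \in s -> nabla x.1.2 = \sum_(y <- x.2) tm OAM (kd OA y.1) y.2.

Lemma curv_spec m s : nabla_repr2 m s -> curv O2M nabla m =
    \sum_(x <- s) \sum_(y <- x.2) tm O2M (wedge O2 (kd OA x.1.1) (kd OA y.1)) y.2.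
Proof.
case=> nabla_m nabla_s; move: s nabla_m nabla_s; rewrite /curv; apply_the_objP.
have [E [lin_E E_tm]] := tm_univ OAM conn_ext_bil.
(* The second component of [E] extends [nabla] to [Omega(A) (x) M -> Omega^2(A) (x) M]. *)
exists (E (nabla m)).2 => s nabla_m nabla_s.
rewrite nabla_m (addfun_sum (islinD lin_E)) (addfun_sum (f := snd) (fun _ _ => erefl)).
apply: eq_big_seq => x /nabla_s nabla_x.
rewrite E_tm (proj2 (conn_extP _)) /= nabla_x (addfun_sum (dwedgeDr _)).
by apply: eq_bigr => y _; rewrite dwedge_tm.
Qed.

Lemma nabla_repr2_exists m : exists s, nabla_repr2 m s.
Proof.
have [s0 nabla_m] := tensor_kahler_repr (nabla m).
have [s [s_s0 nabla_s]] := seq_choice s0 (fun p : A * M => tensor_kahler_repr (nabla p.2)).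
by exists s; split=> //; rewrite nabla_m -s_s0 big_map.
Qed.

Lemma TK_K_siM m s : nabla_repr2 m s ->
  TK (K (siM S m)) = dd' (siM S m) - \sum_(x <- s)
    (i2 (siM S x.1.2) * dd' (siA S x.1.1) + d (siA S x.1.1) * d' (siM S x.1.2) +
     (d (siM S x.1.2) - \sum_(y <- x.2) i2 (siM S y.2) * d (siA S y.1)) * d' (siA S x.1.1)).
Proof.
move=> [nabla_m nabla_s].
have K_m : K (siM S m) =
    dT TS (siM S m) - \sum_(x <- s) iT TS (siM S x.1.2) * dT TS (siA S x.1.1).
  by rewrite (K_siM (s := map fst s)) ?big_map.
rewrite {1}K_m (algmapB TK_alg) TK_dT K_m (fderB (dT2_fder T2)) (fder_sum (dT2_fder T2)).
rewrite (algmap_sum _ _ TK_alg) -addrA -opprD -big_split /=.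
congr (_ - _); apply: eq_big_seq => x /nabla_s nabla_x.
rewrite (fderM (dT2_fder T2)) (algmapM TK_alg) TK_iT TK_dT K_siA (K_siM nabla_x).
rewrite (algmapB (iT2_alg T2)) (algmap_sum _ _ (iT2_alg T2)).
by congr (_ + (_ - _) * _); apply: eq_bigr => y _; rewrite (algmapM (iT2_alg T2)).
Qed.

Lemma curvK_siM_repr m s : nabla_repr2 m s ->
  curvK T2 K (siM S m) = \sum_(x <- s) \sum_(y <- x.2) psi_term x.1.1 y.1 y.2.
Proof.
move=> hs; have c_alg := cflip_alg T2.
rewrite curvK_siM (TK_K_siM hs) (algmapB c_alg) cflip_dd' (algmap_sum _ _ c_alg).
rewrite opprB addrC addrA subrK -sumrB; apply: eq_bigr => x _ /=.
rewrite !(algmapD c_alg) !(algmapM c_alg) (algmapB c_alg) (algmap_sum _ _ c_alg).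
rewrite cflip_i2 cflip_dd' cflip_d cflip_d' cflip_d cflip_d'.
have -> : \sum_(y <- x.2) c (i2 (siM S y.2) * d (siA S y.1)) =
          \sum_(y <- x.2) i2 (siM S y.2) * d' (siA S y.1).
  by apply: eq_bigr => y _; rewrite (algmapM c_alg) cflip_i2 cflip_d.
set u := \sum_(y <- x.2) _ * d _; set u' := \sum_(y <- x.2) _ * d' _.
have -> : \sum_(y <- x.2) psi_term x.1.1 y.1 y.2 = u' * d (siA S x.1.1) - u * d' (siA S x.1.1).
  by rewrite /u /u' !mulr_suml -sumrB; apply: eq_bigr => y _; rewrite /psi_term; ring.
ring.
Qed.

Lemma psi_curv_repr m s : nabla_repr2 m s ->
  psi T2 (curv O2M nabla m) = \sum_(x <- s) \sum_(y <- x.2) psi_term x.1.1 y.1 y.2.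
Proof.
move=> hs; rewrite (curv_spec hs).
pose t := flatten [seq [seq (x.1.1, y.1, y.2) | y <- x.2] | x <- s].
have flat (V : zmodType) (F : A -> A -> M -> V) :
    \sum_(x <- s) \sum_(y <- x.2) F x.1.1 y.1 y.2 = \sum_(z <- t) F z.1.1 z.1.2 z.2.
  by rewrite big_flatten big_map; apply: eq_bigr => x _; rewrite big_map.
by rewrite (flat _ (fun a b n => tm O2M (wedge O2 (kd OA a) (kd OA b)) n)) psi_spec flat.
Qed.

Lemma curvK_siM_psi m : curvK T2 K (siM S m) = psi T2 (curv O2M nabla m).
Proof.
have [s hs] := nabla_repr2_exists m.
by rewrite (curvK_siM_repr hs) (psi_curv_repr hs).
Qed.

End Connection.

Theorem mainTheorem10 (R : comPzRingType) (A : calg R) (M : lmodType A)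
  (OA : kahler A) (OAM : tensor (kmod OA) M)
  (O2 : ext2 (kmod OA)) (O2M : tensor (esp O2) M)
  (S : symalg M) (OS : kahler (sym S)) (TS : symalg (kmod OS))
  (OTS : kahler (sym TS)) (T2 : symalg (kmod OTS))
  (nabla : M -> tsp OAM) (Hnabla : is_connection nabla) :
  (forall a : A, curvK T2 (Knabla TS nabla) (siA S a) = iT2 T2 (iT TS (siA S a))) /\
  (forall m : M, curvK T2 (Knabla TS nabla) (siM S m) = psi T2 (curv O2M nabla m)) /\
  ((forall m : M, curv O2M nabla m = 0) -> flat T2 (Knabla TS nabla)).
Proof.
have curvK_A := curvK_siA T2 Hnabla; have curvK_M := curvK_siM_psi O2M T2 Hnabla.
split=> //; split=> // curv0; split=> // m.
by rewrite curvK_M curv0 psi0.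
Qed.
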